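(* Let $\mathcal{T}=\langle\Sigma^*\times\mathcal{M},Q,I,F,\Delta\rangle$ be a monoidal finite-state transducer with output monoid $\mathcal{M}=\langle M,\circ,e\rangle$. Then: (1) the monoidal automaton $\mathcal{A}^2_e=\langle\mathcal{M}\times\mathcal{M},Q\times Q,I\times I,F\times F,\Delta^e_2\rangle$, where $\Delta^e_2=\{\langle\langle p_1,p_2\rangle,\langle m_1,m_2\rangle,\langle q_1,q_2\rangle\rangle:\exists a\in\Sigma\cup\{\varepsilon\}\ \langle p_i,\langle a,m_i\rangle,q_i\rangle\in\Delta^{ext}\text{ for }i=1,2\}$, is a squared output automaton for $\mathcal{T}$; (2) the monoidal automaton $\mathcal{A}^2=\langle\mathcal{M}\times\mathcal{M},Q\times Q,I\times I,F\times F,\Delta_2\rangle$, where $\Delta_2=\{\langle\langle p_1,p_2\rangle,\langle m_1,m_2\rangle,\langle q_1,q_2\rangle\rangle:\exists a\in\Sigma\ \langle p_i,\langle a,m_i\rangle,q_i\rangle\in\Delta\text{ for }i=1,2\}\cup\{\langle\langle p_1,p_2\rangle,\langle e,m_2\rangle,\langle p_1,q_2\rangle\rangle:\langle p_2,\langle\varepsilon,m_2\rangle,q_2\rangle\in\Delta\}\cup\{\langle\langle p_1,p_2\rangle,\langle m_1,e\rangle,\langle q_1,p_2\rangle\rangle:\langle p_1,\langle\varepsilon,m_1\rangle,q_1\rangle\in\Delta\}$, is a squared output automaton for $\mathcal{T}$.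
   Context: The transducer has finite $\Delta\subseteq Q\times((\Sigma\cup\{\varepsilon\})\times M)\times Q$. $\Delta^{ext}=\Delta\cup\{\langle q,\langle\varepsilon,e\rangle,q\rangle:q\in Q\}$. For a monoidal automaton with transitions $\Delta$, the generalized transition relation $\Delta^*$ is the least set containing $\langle q,\text{unit},q\rangle$ for every state $q$ and closed under: $\langle q_1,w,q_2\rangle\in\Delta^*$, $\langle q_2,a,q_3\rangle\in\Delta$ imply $\langle q_1,w\circ a,q_3\rangle\in\Delta^*$ (products in $\mathcal{M}\times\mathcal{M}$ and $\Sigma^*\times\mathcal{M}$ are componentwise). A monoidal automaton $\langle\mathcal{M}\times\mathcal{M},Q\times Q,I\times I,F\times F,\Delta_2\rangle$ with finite $\Delta_2$ is a squared output automaton for $\mathcal{T}$ if for all $p_1,p_2,q_1,q_2\in Q$, $m,n\in M$: $\langle\langle p_1,p_2\rangle,\langle m,n\rangle,\langle q_1,q_2\rangle\rangle\in\Delta_2^*$ iff there is $u\in\Sigma^*$ with $\langle p_1,\langle u,m\rangle,q_1\rangle\in\Delta^*$ and $\langle p_2,\langle u,n\rangle,q_2\rangle\in\Delta^*$. *)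

From mathcomp Require Import all_boot.
From Stdlib Require List.
Set Implicit Arguments.
Unset Strict Implicit.
Unset Printing Implicit Defensive.

Definition fin_trans (S L : Type) (D : S -> L -> S -> Prop) : Prop :=
  exists s : list (S * L * S), forall p l q, D p l q <-> List.In (p, l, q) s.

Inductive gstar (S L : Type) (op : L -> L -> L) (u : L)
    (D : S -> L -> S -> Prop) : S -> L -> S -> Prop :=
| gstar_refl q : gstar op u D q u q
| gstar_step q1 w q2 a q3 :
    gstar op u D q1 w q2 -> D q2 a q3 -> gstar op u D q1 (op w a) q3.

Definition pair_op (A B : Type) (opA : A -> A -> A) (opB : B -> B -> B)
  (x y : A * B) : A * B := (opA x.1 y.1, opB x.2 y.2).

(* The word in Σ* denoted by a ∈ Σ ∪ {ε} (None = ε). *)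
Definition opt_word (Sigma : Type) (a : option Sigma) : seq Sigma :=
  if a is Some x then [:: x] else [::].

(* A transducer transition ⟨p,⟨a,m⟩,q⟩, a ∈ Σ ∪ {ε}, viewed as a transition
   of the monoidal automaton over Σ* × M. *)
Definition trans_lift (Sigma Q M : Type) (Delta : Q -> option Sigma * M -> Q -> Prop)
  (p : Q) (l : seq Sigma * M) (q : Q) : Prop :=
  exists a, Delta p (a, l.2) q /\ l.1 = opt_word a.

Definition tstar (Sigma Q M : Type) (op : M -> M -> M) (e : M)
  (Delta : Q -> option Sigma * M -> Q -> Prop) : Q -> seq Sigma * M -> Q -> Prop :=
  gstar (pair_op (@cat Sigma) op) ([::], e) (trans_lift Delta).

Definition Delta_ext (Sigma Q M : Type) (e : M)
  (Delta : Q -> option Sigma * M -> Q -> Prop) (p : Q) (l : option Sigma * M) (q : Q)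
  : Prop := Delta p l q \/ (l = (None, e) /\ p = q).

Definition Delta2e (Sigma Q M : Type) (e : M)
  (Delta : Q -> option Sigma * M -> Q -> Prop)
  (p : Q * Q) (m : M * M) (q : Q * Q) : Prop :=
  exists a : option Sigma,
    Delta_ext e Delta p.1 (a, m.1) q.1 /\ Delta_ext e Delta p.2 (a, m.2) q.2.

Definition Delta2 (Sigma Q M : Type) (e : M)
  (Delta : Q -> option Sigma * M -> Q -> Prop)
  (p : Q * Q) (m : M * M) (q : Q * Q) : Prop :=
  (exists a : Sigma, Delta p.1 (Some a, m.1) q.1 /\ Delta p.2 (Some a, m.2) q.2)
  \/ (m.1 = e /\ q.1 = p.1 /\ Delta p.2 (None, m.2) q.2)
  \/ (m.2 = e /\ q.2 = p.2 /\ Delta p.1 (None, m.1) q.1).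

(* ⟨M×M, Q×Q, I×I, F×F, D2⟩ is a squared output automaton for the transducer
   with transitions Delta (I, F play no role in the definition). *)
Definition squared_output (Sigma Q M : Type) (op : M -> M -> M) (e : M)
  (Delta : Q -> option Sigma * M -> Q -> Prop)
  (D2 : Q * Q -> M * M -> Q * Q -> Prop) : Prop :=
  fin_trans D2 /\
  forall (p1 p2 q1 q2 : Q) (m n : M),
    gstar (pair_op op op) (e, e) D2 (p1, p2) (m, n) (q1, q2) <->
    exists u : seq Sigma,
      tstar op e Delta p1 (u, m) q1 /\ tstar op e Delta p2 (u, n) q2.

(* Both automata lie between Δ_2 and Δ^e_2, so it suffices to show that runs
   of Δ^e_2 project to two transducer runs reading the same word, and that two
   such runs can be zipped into a run of Δ_2: steps reading a letter are paired
   with each other, and an ε-step on one side is paired with the unit on the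
   other.  Finiteness holds because all labels are pairs of outputs of Δ or e.
   Runs extend only on the right, so of the monoid laws just [op x e = x] is
   needed. *)

From mathcomp Require Import all_boot.
From Stdlib Require List ClassicalEpsilon.

Set Implicit Arguments.
Unset Strict Implicit.
Unset Printing Implicit Defensive.

Lemma gstar_sub (S L : Type) (op : L -> L -> L) (u : L) (D D' : S -> L -> S -> Prop) :
  (forall p l q, D p l q -> D' p l q) ->
  forall p l q, gstar op u D p l q -> gstar op u D' p l q.
Proof.
move=> sDD' p l q; elim=> [r | r w s a t _ IH /sDD' Dst]; first exact: gstar_refl.
exact: gstar_step IH Dst.
Qed.

Lemma fin_trans_sub (S L : Type) (D : S -> L -> S -> Prop) (s : list (S * L * S)) :
  (forall p l q, D p l q -> List.In (p, l, q) s) -> fin_trans D.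
Proof.
move=> sDs.
pose inD t := if ClassicalEpsilon.excluded_middle_informative (D t.1.1 t.1.2 t.2)
              then true else false.
exists (List.filter inD s) => p l q; rewrite List.filter_In /inD /=.
case: ClassicalEpsilon.excluded_middle_informative => Dplq; last by split=> // [[]].
by split=> // _; split; [exact: sDs | ].
Qed.

Lemma fin_trans_subrel (S L : Type) (D D' : S -> L -> S -> Prop) :
  (forall p l q, D p l q -> D' p l q) -> fin_trans D' -> fin_trans D.
Proof. by move=> sDD' [s Ds]; apply: (@fin_trans_sub _ _ _ s) => p l q /sDD' /Ds. Qed.

Lemma In_enum (T : finType) (x : T) : List.In x (enum T).
Proof.
have : x \in enum T by rewrite mem_enum.
by elim: (enum T) => //= y s IH; rewrite in_cons => /orP [/eqP ->|/IH]; auto.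
Qed.

Lemma fin_trans_labels (S : finType) (L : Type) (D : S -> L -> S -> Prop) (ls : list L) :
  (forall p l q, D p l q -> List.In l ls) -> fin_trans D.
Proof.
move=> Dls; apply: (@fin_trans_sub _ _ _ (List.list_prod (List.list_prod (enum S) ls) (enum S))).
by move=> p l q /Dls lls; rewrite !List.in_prod_iff; do !split => //; exact: In_enum.
Qed.

Section SquaredOutput.

Variables (Sigma Q M : Type) (op : M -> M -> M) (e : M).
Hypothesis opm1 : forall x, op x e = x.
Variable Delta : Q -> option Sigma * M -> Q -> Prop.

Local Notation T := (tstar op e Delta).
Local Notation gstar2 D2 := (gstar (pair_op op op) (e, e) D2).

Lemma Delta2_sub_Delta2e p m q : Delta2 e Delta p m q -> Delta2e e Delta p m q.
Proof.
case: p m q => [p1 p2] [m1 m2] [q1 q2]; rewrite /Delta2 /=.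
case=> [[a [D1 D2]] | [[-> [-> D2]] | [-> [-> D1]]]].
- by exists (Some a); split; left.
- by exists None; split; [right | left].
- by exists None; split; [left | right].
Qed.

Lemma tstar_ext_step p0 u x p a m q :
  T p0 (u, x) p -> Delta_ext e Delta p (a, m) q ->
  T p0 (u ++ opt_word a, op x m) q.
Proof.
move=> Tp0p [Dpq | [[-> ->] <-]]; last by rewrite /= cats0 opm1.
have lift_pq : trans_lift Delta p (opt_word a, m) q by exists a.
exact: gstar_step Tp0p lift_pq.
Qed.

Lemma gstar_Delta2e_sound P x R : gstar2 (Delta2e e Delta) P x R ->
  exists u, T P.1 (u, x.1) R.1 /\ T P.2 (u, x.2) R.2.
Proof.
elim=> [q | q1 w [r1 r2] [m1 m2] [s1 s2] _ [u [T1 T2]] [a [E1 E2]]].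
  by exists [::]; split; apply: gstar_refl.
by exists (u ++ opt_word a); split; apply: tstar_ext_step; eassumption.
Qed.

Lemma gstar_Delta2_sync p r1 r2 m n a m' n' s1 s2 :
  gstar2 (Delta2 e Delta) p (m, n) (r1, r2) ->
  Delta r1 (Some a, m') s1 -> Delta r2 (Some a, n') s2 ->
  gstar2 (Delta2 e Delta) p (op m m', op n n') (s1, s2).
Proof.
move=> G D1 D2; have step : Delta2 e Delta (r1, r2) (m', n') (s1, s2) by left; exists a.
exact: gstar_step G step.
Qed.

Lemma gstar_Delta2_epsl p r1 r2 m n m' s1 :
  gstar2 (Delta2 e Delta) p (m, n) (r1, r2) -> Delta r1 (None, m') s1 ->
  gstar2 (Delta2 e Delta) p (op m m', n) (s1, r2).
Proof.
move=> G D1; have step : Delta2 e Delta (r1, r2) (m', e) (s1, r2) by right; right.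
by rewrite -[n in gstar _ _ _ _ (_, n) _]opm1; exact: gstar_step G step.
Qed.

Lemma gstar_Delta2_epsr p r1 r2 m n n' s2 :
  gstar2 (Delta2 e Delta) p (m, n) (r1, r2) -> Delta r2 (None, n') s2 ->
  gstar2 (Delta2 e Delta) p (m, op n n') (r1, s2).
Proof.
move=> G D2; have step : Delta2 e Delta (r1, r2) (e, n') (r1, s2) by right; left.
by rewrite -[m in gstar _ _ _ _ (m, _) _]opm1; exact: gstar_step G step.
Qed.

(* Induction on the first run; inside, induction on the second run, whose
   trailing ε-steps are absorbed one by one before its letters are matched. *)
Lemma tstar_sync_complete p1 x q1 : T p1 x q1 ->
  forall p2 y q2, T p2 y q2 -> x.1 = y.1 ->
  gstar2 (Delta2 e Delta) (p1, p2) (x.2, y.2) (q1, q2).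
Proof.
elim=> [r | r w s l t T1 IH1 [[a|] [D1 El]]] p2 y q2 T2.
- elim: T2 => [r' | r' w' s' l' t' _ IH2 [[b|] [D2 El']]] /= Eu.
  + exact: gstar_refl.
  + by move: Eu; rewrite El'; case: w'.1.
  + by apply: gstar_Delta2_epsr D2; apply: IH2; rewrite Eu El' cats0.
- rewrite /= El; elim: T2 => [r' | r' w' s' l' t' T2 IH2 [[b|] [D2 El']]] /= Eu.
  + by move: Eu; case: w.1.
  + move: Eu; rewrite El' !cats1 => /rcons_inj [Ew Eab]; subst b.
    exact: gstar_Delta2_sync (IH1 _ _ _ T2 Ew) D1 D2.
  + by apply: gstar_Delta2_epsr D2; apply: IH2; rewrite Eu El' cats0.
- rewrite /= El cats0 => Eu.
  exact: gstar_Delta2_epsl (IH1 _ _ _ T2 Eu) D1.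
Qed.

Lemma squared_output_between (D2 : Q * Q -> M * M -> Q * Q -> Prop) :
  (forall p m q, Delta2 e Delta p m q -> D2 p m q) ->
  (forall p m q, D2 p m q -> Delta2e e Delta p m q) ->
  fin_trans D2 -> squared_output op e Delta D2.
Proof.
move=> sub2 sub2e finD2; split=> // p1 p2 q1 q2 m n; split.
  by move/(gstar_sub sub2e)/gstar_Delta2e_sound.
case=> u [T1 T2]; apply: (gstar_sub sub2).
exact: tstar_sync_complete T1 _ _ _ T2 erefl.
Qed.

End SquaredOutput.

Lemma fin_trans_Delta2e (Sigma Q : finType) (M : Type) (e : M)
  (Delta : Q -> option Sigma * M -> Q -> Prop) :
  fin_trans Delta -> fin_trans (Delta2e e Delta).
Proof.
move=> [s Ds]; pose ms := e :: List.map (fun t => t.1.2.2) s.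
have ext_ms p a m q : Delta_ext e Delta p (a, m) q -> List.In m ms.
  case=> [/Ds Dt | [[_ ->] _]]; last by left.
  by right; exact: (List.in_map (fun t => t.1.2.2) _ _ Dt).
apply: (@fin_trans_labels _ _ _ (List.list_prod ms ms)) => p [m1 m2] q [a [E1 E2]].
by apply/List.in_prod_iff; split; [exact: ext_ms E1 | exact: ext_ms E2].
Qed.

Theorem proposition6 (Sigma Q : finType) (M : Type) (op : M -> M -> M) (e : M)
  (opA : forall x y z, op x (op y z) = op (op x y) z)
  (op1m : forall x, op e x = x) (opm1 : forall x, op x e = x)
  (I F : {set Q})
  (Delta : Q -> option Sigma * M -> Q -> Prop)
  (Delta_fin : fin_trans Delta) :
  squared_output op e Delta (Delta2e e Delta) /\
  squared_output op e Delta (Delta2 e Delta).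
Proof.
have fin2e := fin_trans_Delta2e e Delta_fin.
have sub := @Delta2_sub_Delta2e Sigma Q M e Delta.
split; apply: squared_output_between => //.
exact: fin_trans_subrel sub fin2e.
Qed.
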